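(* For finite $n\geq2$, the class of completely representable algebras in $TA_n$ is elementary; indeed it is axiomatized by a finite set of first-order sentences (namely $\Sigma_n$ together with the sentence expressing atomicity of the Boolean reduct), and it coincides with the class of atomic members of $TA_n$.
   Context: $TA_n=\mathbf{Mod}(\Sigma_n)$, where $\Sigma_n$ is a finite set of equations consisting of the Boolean algebra axioms, the equations saying each $s_{ij}$ ($i\neq j<n$) is a Boolean endomorphism, and equations $t_1(x)=t_2(x)$ for words $t_1,t_2$ in the $s_{ij}$ whose associated compositions of transpositions coincide in $S_n$ (finitely many suffice). A complete representation of $\mathfrak A$ is an injective homomorphism $f:\mathfrak A\to\wp(V)$, $V$ permutable (closed under $s\mapsto s\circ[i,j]$), with $f(\prod Y)=\bigcap f[Y]$ whenever $\prod Y$ exists; here $\wp(V)=\langle\mathcal P(V);\cap,-,S_{ij}\rangle$, $S_{ij}(Y)=\{q\in V:q\circ[i,j]\in Y\}$. *)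

From mathcomp Require Import all_boot all_order all_fingroup.
From Stdlib Require List.
Set Implicit Arguments. Unset Strict Implicit. Unset Printing Implicit Defensive.

Record tstruct (n : nat) := TStruct {
  carrier :> Type;
  tmeet : carrier -> carrier -> carrier;
  tcompl : carrier -> carrier;
  tsub : 'I_n -> 'I_n -> carrier -> carrier }.

Section TA.
Variables (n : nat) (A : tstruct n).
Local Notation "x * y" := (tmeet x y).
Local Notation "- x" := (tcompl x).

Definition tjoin (x y : A) : A := - (- x * - y).
Local Notation "x + y" := (tjoin x y).

(* Boolean algebra axioms in the signature (.,-) (a complete, partly redundant, list) *)
Definition boolean_axioms : Prop :=
  (forall x y : A, x * y = y * x) /\
  (forall x y z : A, x * (y * z) = (x * y) * z) /\
  (forall x : A, x * x = x) /\
  (forall x y : A, x + y = y + x) /\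
  (forall x y z : A, x + (y + z) = (x + y) + z) /\
  (forall x y : A, x * (x + y) = x) /\
  (forall x y : A, x + (x * y) = x) /\
  (forall x y z : A, x * (y + z) = (x * y) + (x * z)) /\
  (forall x : A, - - x = x) /\
  (forall x y : A, x * - x = y * - y).

Definition sub_endo : Prop :=
  forall i j : 'I_n, i != j ->
    (forall x y : A, tsub i j (x * y) = tsub i j x * tsub i j y) /\
    (forall x : A, tsub i j (- x) = - tsub i j x).

Definition word := seq ('I_n * 'I_n).
Definition word_ok (w : word) : bool := all (fun p => p.1 != p.2) w.
Definition word_act (w : word) (x : A) : A := foldr (fun p y => tsub p.1 p.2 y) x w.
Definition word_perm (w : word) : {perm 'I_n} :=
  foldr (fun p (acc : {perm 'I_n}) => (tperm p.1 p.2 * acc)%g) 1%g w.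

Definition perm_equations : Prop :=
  forall w1 w2 : word, word_ok w1 -> word_ok w2 -> word_perm w1 = word_perm w2 ->
    forall x : A, word_act w1 x = word_act w2 x.

(* membership in TA_n = Mod(Sigma_n) *)
Definition in_TA : Prop := [/\ boolean_axioms, sub_endo & perm_equations].

Definition tle (x y : A) : Prop := x * y = x.
Definition is_zero (x : A) : Prop := x = x * - x.
Definition is_atom (a : A) : Prop :=
  ~ is_zero a /\ forall b, tle b a -> b = a \/ is_zero b.
Definition atomic : Prop :=
  forall x : A, ~ is_zero x -> exists a, is_atom a /\ tle a x.

Definition is_inf (Y : A -> Prop) (a : A) : Prop :=
  (forall y, Y y -> tle a y) /\ (forall b, (forall y, Y y -> tle b y) -> tle b a).

(* complete representation into wp(V), V a permutable set of n-ary sequences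
   over a base set U; subsets of V are predicates contained in V. *)
Definition complete_rep_into (U : Type) (V : ('I_n -> U) -> Prop)
    (f : A -> ('I_n -> U) -> Prop) : Prop :=
  (forall q i j, V q -> V (fun k => q (tperm i j k))) /\
      (forall x q, f x q -> V q) /\
      (forall x y, (forall q, f x q <-> f y q) -> x = y) /\
      (forall x y q, f (x * y) q <-> (f x q /\ f y q)) /\
      (forall x q, f (- x) q <-> (V q /\ ~ f x q)) /\
      (forall i j x q, i != j ->
          (f (tsub i j x) q <-> (V q /\ f x (fun k => q (tperm i j k))))) /\
      (forall (Y : A -> Prop) (a : A), is_inf Y a ->
          forall q, f a q <-> (V q /\ forall y, Y y -> f y q)).

Definition completely_representable : Prop :=
  exists (U : Type) (V : ('I_n -> U) -> Prop) (f : A -> ('I_n -> U) -> Prop),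
    complete_rep_into V f.
End TA.

Inductive term (n : nat) :=
  | TVar of nat
  | TMeet of term n & term n
  | TCompl of term n
  | TSub of 'I_n & 'I_n & term n.

Inductive formula (n : nat) :=
  | FEq of term n & term n
  | FNot of formula n
  | FAnd of formula n & formula n
  | FForall of nat & formula n.

Fixpoint term_vars n (t : term n) : seq nat :=
  match t with
  | TVar k => [:: k]
  | TMeet t1 t2 => term_vars t1 ++ term_vars t2
  | TCompl t1 => term_vars t1
  | TSub _ _ t1 => term_vars t1
  end.

Fixpoint free_vars n (phi : formula n) : seq nat :=
  match phi with
  | FEq t1 t2 => term_vars t1 ++ term_vars t2
  | FNot p => free_vars p
  | FAnd p1 p2 => free_vars p1 ++ free_vars p2
  | FForall k p => filter (fun m => m != k) (free_vars p)
  end.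

Definition sentence n (phi : formula n) : bool := nilp (free_vars phi).

Fixpoint teval n (A : tstruct n) (rho : nat -> A) (t : term n) : A :=
  match t with
  | TVar k => rho k
  | TMeet t1 t2 => tmeet (teval rho t1) (teval rho t2)
  | TCompl t1 => tcompl (teval rho t1)
  | TSub i j t1 => tsub i j (teval rho t1)
  end.

Fixpoint sat n (A : tstruct n) (rho : nat -> A) (phi : formula n) : Prop :=
  match phi with
  | FEq t1 t2 => teval rho t1 = teval rho t2
  | FNot p => ~ sat rho p
  | FAnd p1 p2 => sat rho p1 /\ sat rho p2
  | FForall k p => forall a : A, sat (fun m => if m == k then a else rho m) p
  end.

Definition models n (Gamma : seq (formula n)) (A : tstruct n) : Prop :=
  forall phi, Stdlib.Lists.List.In phi Gamma -> forall rho : nat -> A, sat rho phi.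

(* For n > 0 an algebra A in TA_n = Mod(Sigma_n) is completely representable
   iff its Boolean reduct is atomic:
   - an atomic A is represented on the base A * 'I_n: the points are the
     sequences k |-> (a, sigma k) for an atom a and a permutation sigma given
     by a word w in the s_ij, and x holds at such a point iff w(a) <= x; the
     permutation equations make this well defined, s_ij maps atoms to atoms,
     and infima are preserved because every point is determined by an atom;
   - conversely, in a complete representation the elements holding at a
     point form an ultrafilter whose nonzero lower bounds are atoms, so an
     element with no atom below it would have infimum 0 over such a filter.
   The class is then axiomatized by the finite set of sentences: Boolean
   axioms, "s_ij is an endomorphism", the finitely many permutation
   equations relating fixed canonical words, and atomicity. *)

From mathcomp Require Import all_boot all_order all_fingroup.
From Stdlib Require Import Classical.
Set Implicit Arguments. Unset Strict Implicit. Unset Printing Implicit Defensive.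

Section BooleanOrder.
Variables (n : nat) (A : tstruct n).
Hypothesis HB : boolean_axioms A.
Local Notation "x * y" := (tmeet x y).
Local Notation "- x" := (tcompl x).
Local Notation "x + y" := (tjoin x y).

Lemma meetC (x y : A) : x * y = y * x.
Proof. by case: HB. Qed.

Lemma meetA (x y z : A) : x * (y * z) = (x * y) * z.
Proof. by case: HB => _ []. Qed.

Lemma meetI (x : A) : x * x = x.
Proof. by case: HB => _ [_ []]. Qed.

Lemma meet_absorb (x y : A) : x * (x + y) = x.
Proof. by case: HB => _ [_ [_ [_ [_ []]]]]. Qed.

Lemma join_absorb (x y : A) : x + (x * y) = x.
Proof. by case: HB => _ [_ [_ [_ [_ [_ []]]]]]. Qed.

Lemma meet_joinr (x y z : A) : x * (y + z) = (x * y) + (x * z).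
Proof. by case: HB => _ [_ [_ [_ [_ [_ [_ []]]]]]]. Qed.

Lemma complK (x : A) : - - x = x.
Proof. by case: HB => _ [_ [_ [_ [_ [_ [_ [_ []]]]]]]]. Qed.

Lemma meet_compl_const (x y : A) : x * - x = y * - y.
Proof. by case: HB => _ [_ [_ [_ [_ [_ [_ [_ [_ ]]]]]]]]. Qed.

Lemma le_refl (x : A) : tle x x.
Proof. exact: meetI. Qed.

Lemma le_trans (x y z : A) : tle x y -> tle y z -> tle x z.
Proof. by rewrite /tle => xy yz; rewrite -{1}xy -meetA yz. Qed.

Lemma le_antisym (x y : A) : tle x y -> tle y x -> x = y.
Proof. by rewrite /tle => xy yx; rewrite -xy meetC yx. Qed.

Lemma meet_le_l (x y : A) : tle (x * y) x.
Proof. by rewrite /tle (meetC x y) -meetA meetI. Qed.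

Lemma meet_le_r (x y : A) : tle (x * y) y.
Proof. by rewrite /tle -meetA meetI. Qed.

Lemma le_meet (b x y : A) : tle b (x * y) <-> tle b x /\ tle b y.
Proof.
split => [bxy | [bx by']].
- by split; apply: le_trans bxy _; [exact: meet_le_l | exact: meet_le_r].
- by rewrite /tle meetA bx by'.
Qed.

Lemma zero_meet_compl (x : A) : is_zero (x * - x).
Proof. exact: meet_compl_const. Qed.

Lemma zero_unique (z w : A) : is_zero z -> is_zero w -> z = w.
Proof. by rewrite /is_zero => -> ->; exact: meet_compl_const. Qed.

Lemma le_zero (x z : A) : tle x z -> is_zero z -> is_zero x.
Proof.
move=> xz /(zero_unique (zero_meet_compl x)) ez; move: xz.
by rewrite /tle -ez /is_zero => xz; rewrite -{1}xz meetA meetI.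
Qed.

Lemma zero_le (z x : A) : is_zero z -> tle z x.
Proof.
move=> zz; rewrite /tle.
exact: (zero_unique (le_zero (meet_le_l z x) zz) zz).
Qed.

Lemma le_of_meet_compl_zero (x y : A) : is_zero (x * - y) -> tle x y.
Proof.
move=> /(zero_unique (zero_meet_compl (x * y))) e.
have x_top : x = x * (y + - y).
  by rewrite -{1}(meet_absorb x (- x)) /tjoin (meet_compl_const (- x) (- y)).
by rewrite /tle {2}x_top meet_joinr -e join_absorb.
Qed.

Lemma le_compl_zero (b c : A) : tle b c -> tle b (- c) -> is_zero b.
Proof. by move=> bc bnc; apply: (le_zero _ (zero_meet_compl c)); exact/le_meet. Qed.

Lemma atom_le_compl (a x : A) : is_atom a -> (tle a (- x) <-> ~ tle a x).
Proof.
move=> [nz amin]; split => [anx ax | nax].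
- by apply: nz; apply: le_compl_zero ax anx.
- have [ax | z_ax] := amin _ (meet_le_l a x).
    by case: nax; rewrite -ax; exact: meet_le_r.
  by apply: le_of_meet_compl_zero; rewrite complK.
Qed.
End BooleanOrder.

Section Substitutions.
Variables (n : nat) (A : tstruct n).
Hypotheses (HS : sub_endo A) (HP : perm_equations A).

(* s_ij is an involution, since [i,j] o [i,j] is the identity permutation. *)
Lemma sub_invol (i j : 'I_n) (x : A) : i != j -> tsub i j (tsub i j x) = x.
Proof.
move=> ij; have := HP (w1 := [:: (i, j); (i, j)]) (w2 := [::]).
by rewrite /word_ok /= ij mulg1 tperm2 => /(_ isT isT erefl x).
Qed.

(* Being an involutive endomorphism, s_ij is its own adjoint for the order. *)
Lemma sub_adjoint (i j : 'I_n) (b x : A) :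
  i != j -> (tle b (tsub i j x) <-> tle (tsub i j b) x).
Proof.
move=> ij; have [sub_meet _] := HS ij; rewrite /tle; split => h.
- by rewrite -{2}h sub_meet sub_invol.
- by rewrite -{1}(sub_invol b ij) -sub_meet h sub_invol.
Qed.

Lemma sub_zero (i j : 'I_n) (z : A) : i != j -> is_zero z -> is_zero (tsub i j z).
Proof. by move=> /HS[sub_meet sub_compl]; rewrite /is_zero => {1}->; rewrite sub_meet sub_compl. Qed.

Lemma sub_atom (i j : 'I_n) (a : A) : i != j -> is_atom a -> is_atom (tsub i j a).
Proof.
move=> ij [nz amin]; split.
- by move=> /(sub_zero ij); rewrite sub_invol.
- move=> b /(sub_adjoint _ _ ij) /amin [e | zb].
  + by left; rewrite -e sub_invol.
  + by right; rewrite -(sub_invol b ij); apply: sub_zero.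
Qed.

Lemma word_act_atom (w : word n) (a : A) : word_ok w -> is_atom a -> is_atom (word_act w a).
Proof.
elim: w => [// | [i j] w IH] /= /andP[ij ok] aa.
by apply: sub_atom => //; exact: IH.
Qed.
End Substitutions.

(* The base set
   is A * 'I_n; the point coded by an atom a and a word w is the sequence
   k |-> (a, sigma_w k), sigma_w the permutation of w.  V consists of all such
   points, and the point coded by (a, w) lies in f x iff w(a) <= x.  The
   permutation equations make w(a) depend only on the point, and atomicity
   makes f injective. *)
Section AtomRepresentation.
Variables (n : nat) (A : tstruct n).
Hypothesis n_gt0 : 0 < n.
Hypotheses (HB : boolean_axioms A) (HS : sub_endo A) (HP : perm_equations A).
Hypothesis HAt : atomic A.

Definition coded (a : A) (w : word n) (q : 'I_n -> A * 'I_n) : Prop :=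
  forall k, q k = (a, word_perm w k).

Definition atom_points (q : 'I_n -> A * 'I_n) : Prop :=
  exists a w, [/\ is_atom a, word_ok w & coded a w q].

Definition atom_rep (x : A) (q : 'I_n -> A * 'I_n) : Prop :=
  exists a w, [/\ is_atom a, word_ok w, coded a w q & tle (word_act w a) x].

Lemma coded_act_unique a w a' w' q :
  word_ok w -> word_ok w' -> coded a w q -> coded a' w' q ->
  word_act w a = word_act w' a'.
Proof.
move=> ok ok' c c'; have := c (Ordinal n_gt0); rewrite c' => -[<- _].
apply: HP => //; apply/permP => k.
by have := c k; rewrite c' => -[].
Qed.

Lemma atom_rep_coded a w q x : is_atom a ->
  word_ok w -> coded a w q -> (atom_rep x q <-> tle (word_act w a) x).
Proof.
move=> aa ok c; split => [[a' [w' [_ ok' c' le]]] | le]; last by exists a, w.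
by rewrite (coded_act_unique ok ok' c c').
Qed.

Lemma atom_rep_points x q : atom_rep x q -> atom_points q.
Proof. by move=> [a [w [? ? ? _]]]; exists a, w. Qed.

Lemma point_atom q :
  atom_points q -> exists2 b, is_atom b & forall x, atom_rep x q <-> tle b x.
Proof.
move=> [a [w [aa ok c]]]; exists (word_act w a); first exact: word_act_atom.
by move=> x; exact: atom_rep_coded.
Qed.

(* Atomicity: f x is contained in f y only if x <= y. *)
Lemma atom_rep_le x y : (forall q, atom_rep x q -> atom_rep y q) -> tle x y.
Proof.
move=> sub; apply: le_of_meet_compl_zero => //; apply: NNPP => nz.
have [a [aa /(le_meet HB) [ax any]]] := HAt nz.
have c0 : coded a [::] (fun k => (a, k)) by move=> k; rewrite /= perm1.
have := sub (fun k => (a, k)); rewrite !(atom_rep_coded _ aa _ c0) //= => /(_ ax).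
by move/(atom_le_compl HB _ aa): any.
Qed.

Lemma atom_points_perm q i j : atom_points q -> atom_points (fun k => q (tperm i j k)).
Proof.
move=> [a [w [aa ok c]]]; case: (eqVneq i j) => [<- | ij].
- by exists a, w; split => // k; rewrite tperm1 perm1.
- exists a, ((i, j) :: w); split => //=; first by rewrite ij.
  by move=> k; rewrite c /= permM.
Qed.

Lemma atom_rep_meet x y q : atom_rep (tmeet x y) q <-> atom_rep x q /\ atom_rep y q.
Proof.
have pointwise : atom_points q -> (atom_rep (tmeet x y) q <-> atom_rep x q /\ atom_rep y q).
  by move=> /point_atom[b _ E]; rewrite !E; exact: le_meet.
split => [h | [h h']].
- by rewrite -pointwise //; exact: atom_rep_points h.
- by rewrite pointwise //; exact: atom_rep_points h.
Qed.

Lemma atom_rep_compl x q : atom_rep (tcompl x) q <-> atom_points q /\ ~ atom_rep x q.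
Proof.
split => [h | [p]]; last by have [b ab E] := point_atom p; rewrite !E -atom_le_compl.
have p := atom_rep_points h; have [b ab E] := point_atom p.
by move: h; rewrite !E atom_le_compl.
Qed.

Lemma atom_rep_sub i j x q : i != j ->
  atom_rep (tsub i j x) q <-> atom_points q /\ atom_rep x (fun k => q (tperm i j k)).
Proof.
move=> ij; have pointwise : atom_points q ->
    (atom_rep (tsub i j x) q <-> atom_rep x (fun k => q (tperm i j k))).
  move=> [a [w [aa ok c]]].
  have c' : coded a ((i, j) :: w) (fun k => q (tperm i j k)).
    by move=> k; rewrite c /= permM.
  rewrite (atom_rep_coded _ aa ok c) (atom_rep_coded _ aa _ c') /= ?ij //.
  exact: sub_adjoint.
split => [h | [p h]]; last by rewrite pointwise.
have p := atom_rep_points h; by split => //; rewrite -pointwise.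
Qed.

Lemma atom_rep_inf (Y : A -> Prop) z : is_inf Y z ->
  forall q, atom_rep z q <-> atom_points q /\ forall y, Y y -> atom_rep y q.
Proof.
move=> [lb glb] q; split => [h | [p h]].
- have p := atom_rep_points h; have [b _ E] := point_atom p.
  by split => // y Yy; rewrite E; apply: (le_trans HB _ (lb y Yy)); rewrite -E.
- have [b _ E] := point_atom p; rewrite E; apply: glb => y Yy; rewrite -E; exact: h.
Qed.

Lemma atom_rep_complete : complete_rep_into atom_points atom_rep.
Proof.
split; first by move=> q i j; exact: atom_points_perm.
split; first exact: atom_rep_points.
split; first by move=> x y E; apply: le_antisym => //; apply: atom_rep_le => q; apply E.
split; first exact: atom_rep_meet.
split; first exact: atom_rep_compl.
split; first exact: atom_rep_sub.
exact: atom_rep_inf.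
Qed.
End AtomRepresentation.

(* Conversely, any Boolean algebra with a complete representation is atomic:
   for a point q of V, the elements whose image contains q form an ultrafilter,
   its nonzero lower bounds are atoms, and completeness forbids its infimum to
   be 0 when it contains an element with no atom below it. *)
Section CompleteRepresentationAtomic.
Variables (n : nat) (A : tstruct n) (U : Type).
Variables (V : ('I_n -> U) -> Prop) (f : A -> ('I_n -> U) -> Prop).
Hypotheses (HB : boolean_axioms A) (Hf : complete_rep_into V f).

Lemma rep_in_V x q : f x q -> V q.
Proof. by case: Hf => _ [inV _]; exact: inV. Qed.

Lemma rep_meet x y q : f (tmeet x y) q <-> f x q /\ f y q.
Proof. by case: Hf => _ [_ [_ [meet _]]]; exact: meet. Qed.

Lemma rep_compl x q : f (tcompl x) q <-> V q /\ ~ f x q.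
Proof. by case: Hf => _ [_ [_ [_ [compl _]]]]; exact: compl. Qed.

Lemma rep_zero_empty z q : is_zero z -> ~ f z q.
Proof. by move=> ->; rewrite rep_meet rep_compl => -[? []]. Qed.

Lemma rep_nonzero x : ~ is_zero x -> exists q, f x q.
Proof.
move=> nz; apply: NNPP => empty; apply: nz.
have [_ [_ [inj _]]] := Hf; apply: inj => q.
split => [fx | /(rep_zero_empty (zero_meet_compl HB x))] //.
by case: empty; exists q.
Qed.

Lemma rep_lower_bound_atom q b :
  V q -> (forall y, f y q -> tle b y) -> ~ is_zero b -> is_atom b.
Proof.
move=> Vq lb nzb; split => // c cb.
have [fc | nfc] := classic (f c q); first by left; exact: (le_antisym HB cb (lb _ fc)).
right; apply: (le_compl_zero HB (le_refl HB c) (le_trans HB cb (lb _ _))).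
exact/rep_compl.
Qed.

Lemma rep_atomic : atomic A.
Proof.
move=> x nzx; apply: NNPP => no_atom.
have [q fxq] := rep_nonzero nzx.
have inf0 : is_inf (fun y => f y q) (tmeet x (tcompl x)).
  split => [y _ | b lb]; first exact/zero_le/zero_meet_compl.
  apply/zero_le => //; apply: NNPP => nzb; apply: no_atom; exists b; split.
  - exact: rep_lower_bound_atom (rep_in_V fxq) lb nzb.
  - exact: lb.
have [_ [_ [_ [_ [_ [_ complete]]]]]] := Hf.
have /(complete _ _ inf0 q) : V q /\ forall y, f y q -> f y q by split => //; exact: rep_in_V fxq.
exact: (rep_zero_empty (zero_meet_compl HB x)).
Qed.
End CompleteRepresentationAtomic.

Lemma completely_representable_atomic n (A : tstruct n) :
  boolean_axioms A -> completely_representable A -> atomic A.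
Proof. by move=> HB [U [V [f Hf]]]; exact: rep_atomic Hf. Qed.

Lemma completely_representable_iff_atomic n (A : tstruct n) :
  0 < n -> in_TA A -> (completely_representable A <-> atomic A).
Proof.
move=> n_gt0 [HB HS HP]; split; first exact: completely_representable_atomic.
move=> HAt; exists (A * 'I_n)%type, (@atom_points n A), (@atom_rep n A).
exact: atom_rep_complete.
Qed.

Definition FImp n (p q : formula n) : formula n := FNot (FAnd p (FNot q)).
Definition FOr n (p q : formula n) : formula n := FNot (FAnd (FNot p) (FNot q)).
Definition TJoin n (a b : term n) : term n := TCompl (TMeet (TCompl a) (TCompl b)).
Definition word_term n (w : word n) (t : term n) : term n :=
  foldr (fun p t => TSub p.1 p.2 t) t w.

Lemma term_vars_word_term n (w : word n) t : term_vars (word_term w t) = term_vars t.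
Proof. by elim: w => [|p w IH] //=. Qed.

Lemma teval_word_term n (A : tstruct n) (rho : nat -> A) (w : word n) t :
  teval rho (word_term w t) = word_act w (teval rho t).
Proof. by elim: w => [|p w IH] //=; rewrite IH. Qed.

Lemma word_perm_prod n (w : word n) : word_perm w = (\prod_(t <- w) tperm t.1 t.2)%g.
Proof. by elim: w => [|p w IH] /=; rewrite ?big_nil ?big_cons ?IH. Qed.

Lemma word_of_perm_ex n (s : {perm 'I_n}) : exists w : word n, word_ok w && (word_perm w == s).
Proof. have [ts -> ok] := prod_tpermP s; by exists ts; rewrite word_perm_prod eqxx andbT. Qed.

Definition canonical_word n (s : {perm 'I_n}) : word n := xchoose (word_of_perm_ex s).

Lemma canonical_wordP n (s : {perm 'I_n}) :
  word_ok (canonical_word s) /\ word_perm (canonical_word s) = s.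
Proof. by have /andP[ok /eqP e] := xchooseP (word_of_perm_ex s). Qed.

(* Finitely many instances of the permutation equations suffice: if
   s_ij (c_s x) = c_([i,j] s) x and c_1 x = x for the canonical words c_s,
   every word acts as the canonical word of its permutation. *)
Lemma act_canonical n (A : tstruct n)
  (sub_canonical : forall (i j : 'I_n) s (x : A), i != j ->
     tsub i j (word_act (canonical_word s) x) = word_act (canonical_word (tperm i j * s)%g) x)
  (canonical_one : forall x : A, word_act (canonical_word 1%g) x = x) :
  forall w : word n, word_ok w -> forall x : A, word_act w x = word_act (canonical_word (word_perm w)) x.
Proof.
elim => [|[i j] w IH] /=; first by move=> _ x; rewrite canonical_one.
by move=> /andP[ij ok] x; rewrite IH // sub_canonical.
Qed.

Section Models.
Variables (n : nat) (A : tstruct n).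

Lemma models_cons phi Gamma :
  models (phi :: Gamma) A <-> (forall rho : nat -> A, sat rho phi) /\ models Gamma A.
Proof.
split => [h | [h1 h2] p /= [<- | hp]]; [| exact: h1 | exact: h2].
by split => [|p hp]; apply: h; [left | right].
Qed.

Lemma models_cat Gamma1 Gamma2 :
  models (Gamma1 ++ Gamma2) A <-> models Gamma1 A /\ models Gamma2 A.
Proof. by elim: Gamma1 => [|p G IH] /=; rewrite ?models_cons ?IH; intuition. Qed.

Lemma models_flatten (T : eqType) (F : T -> seq (formula n)) (l : seq T) :
  models (flatten (map F l)) A <-> forall t, t \in l -> models (F t) A.
Proof.
elim: l => [|t l IH] /=; first by split => // _ p [].
rewrite models_cat IH; split => [[hF hl] u | h].
- by rewrite in_cons => /predU1P[-> | /hl].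
- by split => [|u ul]; apply: h; rewrite in_cons ?eqxx ?ul ?orbT.
Qed.

Lemma models_map (T : eqType) (g : T -> formula n) (l : seq T) :
  models (map g l) A <-> forall t, t \in l -> forall rho : nat -> A, sat rho (g t).
Proof.
have -> : map g l = flatten (map (fun t => [:: g t]) l) by elim: l => //= t l ->.
rewrite models_flatten; split => h t /h; rewrite models_cons; first by case.
by move=> sat_g; split => // p [].
Qed.
End Models.

Section Sentences.
Variable n : nat.
Local Notation x := (TVar n 0).
Local Notation y := (TVar n 1).
Local Notation z := (TVar n 2).
Local Notation "a ⊓ b" := (TMeet a b) (at level 40, left associativity).
Local Notation "a ⊔ b" := (TJoin a b) (at level 50, left associativity).
Local Notation "¬ a" := (TCompl a) (at level 35, right associativity).
Local Notation "∀ k , p" := (FForall k p) (at level 200, k at level 0).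

Definition boolean_sentences : seq (formula n) :=
  [:: ∀ 0, ∀ 1, FEq (x ⊓ y) (y ⊓ x);
      ∀ 0, ∀ 1, ∀ 2, FEq (x ⊓ (y ⊓ z)) (x ⊓ y ⊓ z);
      ∀ 0, FEq (x ⊓ x) x;
      ∀ 0, ∀ 1, FEq (x ⊔ y) (y ⊔ x);
      ∀ 0, ∀ 1, ∀ 2, FEq (x ⊔ (y ⊔ z)) (x ⊔ y ⊔ z);
      ∀ 0, ∀ 1, FEq (x ⊓ (x ⊔ y)) x;
      ∀ 0, ∀ 1, FEq (x ⊔ (x ⊓ y)) x;
      ∀ 0, ∀ 1, ∀ 2, FEq (x ⊓ (y ⊔ z)) ((x ⊓ y) ⊔ (x ⊓ z));
      ∀ 0, FEq (¬ ¬ x) x;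
      ∀ 0, ∀ 1, FEq (x ⊓ ¬ x) (y ⊓ ¬ y)].

Definition sub_sentences (p : 'I_n * 'I_n) : seq (formula n) :=
  [:: ∀ 0, ∀ 1, FEq (TSub p.1 p.2 (x ⊓ y)) (TSub p.1 p.2 x ⊓ TSub p.1 p.2 y),
      ∀ 0, FEq (TSub p.1 p.2 (¬ x)) (¬ TSub p.1 p.2 x)
    & [seq ∀ 0, FEq (TSub p.1 p.2 (word_term (canonical_word s) x))
                    (word_term (canonical_word (tperm p.1 p.2 * s)%g) x)
      | s <- enum {: {perm 'I_n}}]].

Definition canonical_one_sentence : formula n :=
  ∀ 0, FEq (word_term (canonical_word 1%g) x) x.

(* Every nonzero x lies above some y that is nonzero and has only y and 0 below it. *)
Definition atomic_sentence : formula n :=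
  ∀ 0, FNot (FAnd (FNot (FEq x (x ⊓ ¬ x)))
    (∀ 1, FNot (FAnd
       (FAnd (FNot (FEq y (y ⊓ ¬ y)))
             (∀ 2, FImp (FEq (z ⊓ y) z) (FOr (FEq z y) (FEq z (z ⊓ ¬ z)))))
       (FEq (y ⊓ x) y)))).

Definition distinct_pairs : seq ('I_n * 'I_n) :=
  [seq p <- enum {: 'I_n * 'I_n} | p.1 != p.2].

Definition atomic_TA_sentences : seq (formula n) :=
  boolean_sentences ++ flatten (map sub_sentences distinct_pairs)
    ++ [:: canonical_one_sentence; atomic_sentence].

Lemma atomic_TA_sentences_closed : all (@sentence n) atomic_TA_sentences.
Proof.
rewrite /atomic_TA_sentences !all_cat /= andbT; apply/andP; split.
- elim: distinct_pairs => //= p ps IH; rewrite all_cat IH andbT /= all_map.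
  by apply/allP => s _; rewrite /sentence /= !term_vars_word_term.
- by rewrite /sentence /= term_vars_word_term.
Qed.

Lemma boolean_sentencesP (A : tstruct n) : models boolean_sentences A <-> boolean_axioms A.
Proof.
rewrite /boolean_sentences !models_cons; split.
- move=> [h1 [h2 [h3 [h4 [h5 [h6 [h7 [h8 [h9 [h10 _]]]]]]]]]].
  (* each sentence is closed, so any valuation (here a constant one) will do *)
  split; first by move=> a b; exact: (h1 (fun _ => a) a b).
  split; first by move=> a b c; exact: (h2 (fun _ => a) a b c).
  split; first by move=> a; exact: (h3 (fun _ => a) a).
  split; first by move=> a b; exact: (h4 (fun _ => a) a b).
  split; first by move=> a b c; exact: (h5 (fun _ => a) a b c).
  split; first by move=> a b; exact: (h6 (fun _ => a) a b).
  split; first by move=> a b; exact: (h7 (fun _ => a) a b).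
  split; first by move=> a b c; exact: (h8 (fun _ => a) a b c).
  split; first by move=> a; exact: (h9 (fun _ => a) a).
  by move=> a b; exact: (h10 (fun _ => a) a b).
- move=> [h1 [h2 [h3 [h4 [h5 [h6 [h7 [h8 [h9 h10]]]]]]]]].
  by do 10 (split; first by move=> rho); move=> p [].
Qed.

Lemma atomic_sentenceP (A : tstruct n) :
  (forall rho : nat -> A, sat rho atomic_sentence) <-> atomic A.
Proof.
split => [h a nz | h rho a /= [nz no_atom]].
- apply: NNPP => no_atom; apply: (h (fun _ => a) a) => /=; split => // b [[nzb bmin] ba].
  apply: no_atom; exists b; split => //; split => // c cb.
  have := bmin c => /=; rewrite /is_zero.
  by case: (classic (c = b)); case: (classic (c = tmeet c (tcompl c))); tauto.
- have [b [[nzb bmin] ba]] := h a nz; apply: (no_atom b); split => //; split => // c [cb].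
  by case: (bmin c cb); tauto.
Qed.

Lemma sub_sentencesP (A : tstruct n) (p : 'I_n * 'I_n) :
  models (sub_sentences p) A <->
  [/\ forall a b : A, tsub p.1 p.2 (tmeet a b) = tmeet (tsub p.1 p.2 a) (tsub p.1 p.2 b),
      forall a : A, tsub p.1 p.2 (tcompl a) = tcompl (tsub p.1 p.2 a) &
      forall s (a : A), tsub p.1 p.2 (word_act (canonical_word s) a)
                        = word_act (canonical_word (tperm p.1 p.2 * s)%g) a].
Proof.
rewrite /sub_sentences !models_cons models_map; split.
- move=> [h1 [h2 h3]]; split.
  + by move=> a b; exact: (h1 (fun _ => a) a b).
  + by move=> a; exact: (h2 (fun _ => a) a).
  + move=> s a; have := h3 s (mem_enum _ s) (fun _ => a) a.
    by rewrite /= !teval_word_term.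
- move=> [h1 h2 h3]; split; first by move=> rho; exact: h1.
  split; first by move=> rho; exact: h2.
  by move=> s _ rho a /=; rewrite !teval_word_term.
Qed.

Lemma canonical_one_sentenceP (A : tstruct n) :
  (forall rho : nat -> A, sat rho canonical_one_sentence) <->
  (forall a : A, word_act (canonical_word 1%g) a = a).
Proof.
split => [h a | h rho a /=]; last by rewrite teval_word_term.
by have := h (fun _ => a) a; rewrite /= teval_word_term.
Qed.
End Sentences.

Lemma mem_distinct_pairs n (p : 'I_n * 'I_n) : (p \in distinct_pairs n) = (p.1 != p.2).
Proof. by rewrite mem_filter mem_enum andbT. Qed.

Lemma sub_sentences_iff n (A : tstruct n) :
  (forall p, p \in distinct_pairs n -> models (sub_sentences p) A) /\
  (forall rho : nat -> A, sat rho (canonical_one_sentence n))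
  <-> sub_endo A /\ perm_equations A.
Proof.
rewrite canonical_one_sentenceP; split => [[Hsub Hone] | [HS HP]].
- have sub_ax i j : i != j -> models (sub_sentences (i, j)) A.
    by move=> ij; apply: Hsub; rewrite mem_distinct_pairs.
  split => [i j /sub_ax/sub_sentencesP[] // | w1 w2 ok1 ok2 e12 a].
  have sub_canonical i j s (b : A) : i != j ->
      tsub i j (word_act (canonical_word s) b) = word_act (canonical_word (tperm i j * s)%g) b.
    by move=> /sub_ax/sub_sentencesP[_ _]; apply.
  by rewrite (act_canonical sub_canonical Hone ok1) (act_canonical sub_canonical Hone ok2) e12.
- split => [p | a]; last first.
    by have [ok e] := canonical_wordP (1%g : {perm 'I_n}); exact: (HP _ [::] ok isT e).
  rewrite mem_distinct_pairs => ij; apply/sub_sentencesP; have [h1 h2] := HS _ _ ij.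
  split => // s a.
  have [ok1 e1] := canonical_wordP s; have [ok2 e2] := canonical_wordP (tperm p.1 p.2 * s)%g.
  by apply: (HP ((p.1, p.2) :: canonical_word s)); rewrite /= ?ij ?ok1 ?e1 ?e2.
Qed.

Lemma atomic_TA_sentencesP n (A : tstruct n) :
  models (atomic_TA_sentences n) A <-> in_TA A /\ atomic A.
Proof.
rewrite /atomic_TA_sentences !models_cat boolean_sentencesP models_flatten.
rewrite !models_cons atomic_sentenceP; split => [[HB [Hsub [Hone [HAt _]]]] | [[HB HS HP] HAt]].
- by have [HS HP] := proj1 (sub_sentences_iff A) (conj Hsub Hone).
- have [Hsub Hone] := proj2 (sub_sentences_iff A) (conj HS HP).
  by do 4 (split => //); move=> p [].
Qed.

Theorem corollary3p24 (n : nat) (hn : 2 <= n) :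
  (exists Gamma : seq (formula n),
      all (@sentence n) Gamma /\
      forall A : tstruct n,
        models Gamma A <-> (in_TA A /\ completely_representable A)) /\
  (forall A : tstruct n, in_TA A -> (completely_representable A <-> atomic A)).
Proof.
have n_gt0 : 0 < n by apply: leq_trans hn.
split; last by move=> A; exact: completely_representable_iff_atomic.
exists (atomic_TA_sentences n); split; first exact: atomic_TA_sentences_closed.
move=> A; rewrite atomic_TA_sentencesP.
by split => -[TA_A h]; split => //; apply/(completely_representable_iff_atomic n_gt0 TA_A).
Qed.
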